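(* Let $X$ be a quantity space over a field $K$. (1) If $B=\{b_1,\ldots,b_n\}$ is a basis for $X$, then $B^*=\{[b_1],\ldots,[b_n]\}$ is a basis for the abelian group $X/{\sim}$, and $b_i\mapsto[b_i]$ is injective, so $B^*$ has the same cardinality as $B$. (2) Conversely, if $b_1,\ldots,b_n\in X$ are invertible and $B^*=\{[b_1],\ldots,[b_n]\}$ is a basis for $X/{\sim}$ with $[b_i]\neq[b_j]$ for $i\ne j$, then $B=\{b_1,\ldots,b_n\}$ is a basis for $X$ with the same cardinality as $B^*$.
   Context: A scalable monoid over a field $K$ is a monoid $X$ (written multiplicatively, unit $\mathbf{1}=1_X$) with a map $K\times X\to X$, $(\alpha,x)\mapsto\alpha x$, such that $1x=x$, $\alpha(\beta x)=(\alpha\beta)x$, and $\alpha(xy)=(\alpha x)y=x(\alpha y)$ for all $\alpha,\beta\in K$, $x,y\in X$. It is commutative if $xy=yx$ for all $x,y$. For invertible $b$, $b^0=\mathbf{1}$ and negative powers are powers of $b^{-1}$. A (finite) basis of a commutative scalable monoid $X$ over $K$ is a finite set $B=\{b_1,\ldots,b_n\}$ of invertible elements of $X$ such that every $x\in X$ has an expansion $x=\mu\prod_{i=1}^n b_i^{k_i}$ with $\mu\in K$ and $k_1,\ldots,k_n\in\mathbb{Z}$, and this expansion is unique (i.e. $\mu$ and $(k_1,\ldots,k_n)$ are uniquely determined by $x$). A quantity space over $K$ is a commutative scalable monoid over $K$ that has a finite basis. Elements $x,y$ are commensurable, $x\sim y$, if $\alpha x=\beta y$ for some $\alpha,\beta\in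 K$; this is an equivalence relation and a congruence, its classes are called realms (dimensions), $[x]$ is the realm of $x$, and $X/{\sim}$ is the set of realms with product $[x][y]=[xy]$ and unit $[\mathbf{1}]$; for a quantity space this is a commutative monoid in which every element has an inverse, i.e. an abelian group. A basis of the abelian group $X/{\sim}$ is a finite set $\{c_1,\ldots,c_n\}\subseteq X/{\sim}$ such that every element of $X/{\sim}$ can be written uniquely as $\prod_{i=1}^n c_i^{k_i}$ with $k_i\in\mathbb{Z}$. *)

From HB Require Import structures.
From mathcomp Require Import all_boot all_order all_algebra.
From Stdlib Require Import ClassicalEpsilon.
Set Implicit Arguments. Unset Strict Implicit. Unset Printing Implicit Defensive.
Import GRing.Theory.
Local Open Scope ring_scope.

Section MonoidNotions.
Variables (T : Type) (mul : T -> T -> T) (one : T).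

Definition m_invertible (x : T) : Prop := exists y, mul x y = one /\ mul y x = one.

(* the inverse of x (chosen; it is the unique inverse whenever x is invertible) *)
Definition m_inv (x : T) : T :=
  epsilon (inhabits one) (fun y => mul x y = one /\ mul y x = one).

Definition m_zpow (x : T) (k : int) : T :=
  match k with
  | Posz n => iter n (mul x) one
  | Negz n => iter n.+1 (mul (m_inv x)) one
  end.

Definition m_prodpow (n : nat) (b : 'I_n -> T) (k : 'I_n -> int) : T :=
  \big[mul/one]_(i < n) m_zpow (b i) (k i).

Definition group_basis (n : nat) (c : 'I_n -> T) : Prop :=
  (forall g : T, exists k : 'I_n -> int, g = m_prodpow c k) /\
  (forall k k' : 'I_n -> int, m_prodpow c k = m_prodpow c k' -> forall i, k i = k' i).
End MonoidNotions.

Record scalable_monoid (K : fieldType) := ScalableMonoid {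
  sm_car :> Type;
  sm_mul : sm_car -> sm_car -> sm_car;
  sm_one : sm_car;
  sm_scale : K -> sm_car -> sm_car;
  sm_mulA : forall x y z, sm_mul x (sm_mul y z) = sm_mul (sm_mul x y) z;
  sm_mul1x : forall x, sm_mul sm_one x = x;
  sm_mulx1 : forall x, sm_mul x sm_one = x;
  sm_scale1 : forall x, sm_scale 1 x = x;
  sm_scaleA : forall (a b : K) x, sm_scale a (sm_scale b x) = sm_scale (a * b) x;
  sm_scale_mull : forall (a : K) x y, sm_scale a (sm_mul x y) = sm_mul (sm_scale a x) y;
  sm_scale_mulr : forall (a : K) x y, sm_scale a (sm_mul x y) = sm_mul x (sm_scale a y)
}.

Section QuantitySpaces.
Variables (K : fieldType) (X : scalable_monoid K).

Definition sm_commutative : Prop := forall x y : X, sm_mul x y = sm_mul y x.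

Definition sm_invertible (x : X) : Prop := m_invertible (@sm_mul K X) (sm_one X) x.

Definition sm_basis (n : nat) (b : 'I_n -> X) : Prop :=
  (forall i, sm_invertible (b i)) /\
  (forall x : X, exists (mu : K) (k : 'I_n -> int),
      x = sm_scale mu (m_prodpow (@sm_mul K X) (sm_one X) b k)) /\
  (forall (mu mu' : K) (k k' : 'I_n -> int),
      sm_scale mu (m_prodpow (@sm_mul K X) (sm_one X) b k) =
      sm_scale mu' (m_prodpow (@sm_mul K X) (sm_one X) b k') ->
      mu = mu' /\ forall i, k i = k' i).

Definition quantity_space : Prop :=
  sm_commutative /\ exists (n : nat) (b : 'I_n -> X), sm_basis b.

Definition commensurable (x y : X) : Prop :=
  exists a b : K, sm_scale a x = sm_scale b y.

Definition realm_pred (x : X) : X -> Prop := fun y => commensurable x y.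

Definition realms : Type := {P : X -> Prop | exists x, P = realm_pred x}.

Definition realm (x : X) : realms := exist _ (realm_pred x) (ex_intro _ x erefl).

Definition realm_rep (r : realms) : X :=
  epsilon (inhabits (sm_one X)) (fun x => sval r = realm_pred x).

Definition realm_mul (r s : realms) : realms := realm (sm_mul (realm_rep r) (realm_rep s)).
Definition realm_one : realms := realm (sm_one X).

Definition realms_basis (n : nat) (c : 'I_n -> realms) : Prop :=
  group_basis realm_mul realm_one c.
End QuantitySpaces.

(* The realm map x |-> [x] is a surjective monoid morphism onto X/~ whose
   fibres are the commensurability classes, so it carries products of integer
   powers of invertible elements to the corresponding products of realms.
   Hence [b_1],...,[b_n] span X/~ exactly when every x is commensurable with
   some prod b_i^k_i, and uniqueness of exponents transfers in both directions.
   For (2) it remains to turn "x is commensurable with the invertible element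
   prod b_i^k_i" into "x is a scalar multiple of it, with a unique scalar";
   this is where an existing basis of X is used: it shows that 1 is not a
   multiple of 0, so that commensurability scalars do not vanish. *)
From mathcomp Require Import all_boot all_order all_algebra.
From Stdlib Require Import ClassicalEpsilon ProofIrrelevance FunctionalExtensionality PropExtensionality.

Set Implicit Arguments. Unset Strict Implicit. Unset Printing Implicit Defensive.
Import GRing.Theory.

Lemma m_inv_spec (T : Type) (mul : T -> T -> T) (one x : T) :
  m_invertible mul one x ->
  mul x (m_inv mul one x) = one /\ mul (m_inv mul one x) x = one.
Proof. exact: (epsilon_spec (inhabits one) (fun y => mul x y = one /\ mul y x = one)). Qed.

Section MonoidTheory.
Variables (T : Type) (mul : T -> T -> T) (one : T).
Hypotheses (mulA : associative mul) (mul1m : left_id one mul) (mulm1 : right_id one mul).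
Local Notation invertible := (m_invertible mul one).

Lemma m_inv_unique x y : mul x y = one -> mul y x = one -> m_inv mul one x = y.
Proof.
move=> xy yx; have [_ ix] := m_inv_spec (ex_intro _ y (conj xy yx)).
transitivity (mul (mul (m_inv mul one x) x) y); first by rewrite -mulA xy mulm1.
by rewrite ix mul1m.
Qed.

Lemma m_invertible_one : invertible one.
Proof. by exists one; rewrite mulm1. Qed.

Lemma m_invertible_mul x y : invertible x -> invertible y -> invertible (mul x y).
Proof.
case=> x' [xx' x'x] [y' [yy' y'y]]; exists (mul y' x'); split.
  by rewrite mulA -(mulA x y y') yy' mulm1 xx'.
by rewrite mulA -(mulA y' x' x) x'x mulm1 y'y.
Qed.

Lemma m_invertible_inv x : invertible x -> invertible (m_inv mul one x).
Proof. by move=> ix; have [? ?] := m_inv_spec ix; exists x. Qed.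

Lemma m_invertible_iter x n : invertible x -> invertible (iter n (mul x) one).
Proof.
by move=> ix; elim: n => [|n IH] /=; [exact: m_invertible_one | exact: m_invertible_mul].
Qed.

Lemma m_invertible_zpow x k : invertible x -> invertible (m_zpow mul one x k).
Proof.
move=> ix; case: k => m; first exact: m_invertible_iter.
exact/m_invertible_iter/m_invertible_inv.
Qed.

Lemma m_invertible_prodpow n (b : 'I_n -> T) k :
  (forall i, invertible (b i)) -> invertible (m_prodpow mul one b k).
Proof.
move=> ib; apply: big_ind => [|x y|i _]; first exact: m_invertible_one.
  exact: m_invertible_mul.
exact: m_invertible_zpow.
Qed.

Lemma big_seq_pick1 n (r : seq 'I_n) (x : T) i : uniq r ->
  \big[mul/one]_(j <- r) (if j == i then x else one) = if i \in r then x else one.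
Proof.
elim: r => [|a r IH] /=; first by rewrite big_nil.
case/andP=> ar ur; rewrite big_cons IH // inE.
by have [<-|_] := eqVneq a i; rewrite /= ?(negbTE ar) ?mulm1 ?mul1m.
Qed.

Lemma m_prodpow_delta n (b : 'I_n -> T) i :
  m_prodpow mul one b (fun j => Posz (j == i)) = b i.
Proof.
rewrite /m_prodpow (eq_bigr (fun j => if j == i then b i else one)).
  by rewrite big_seq_pick1 ?index_enum_uniq ?mem_index_enum.
by move=> j _; have [->|_] := eqVneq j i; rewrite /= ?mulm1.
Qed.
End MonoidTheory.

Section MonoidMorphism.
Variables (T1 T2 : Type) (op1 : T1 -> T1 -> T1) (e1 : T1) (op2 : T2 -> T2 -> T2) (e2 : T2).
Hypotheses (op2A : associative op2) (op21m : left_id e2 op2) (op2m1 : right_id e2 op2).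
Variable f : T1 -> T2.
Hypotheses (fM : {morph f : x y / op1 x y >-> op2 x y}) (f1 : f e1 = e2).

Lemma m_inv_morph x :
  m_invertible op1 e1 x -> m_inv op2 e2 (f x) = f (m_inv op1 e1 x).
Proof.
by move=> ix; have [xx' x'x] := m_inv_spec ix; apply: m_inv_unique; rewrite // -fM ?xx' ?x'x.
Qed.

Lemma iter_morph x n : f (iter n (op1 x) e1) = iter n (op2 (f x)) e2.
Proof. by elim: n => //= n <-; rewrite fM. Qed.

Lemma m_zpow_morph x k :
  m_invertible op1 e1 x -> f (m_zpow op1 e1 x k) = m_zpow op2 e2 (f x) k.
Proof. by move=> ix; case: k => m; rewrite /m_zpow iter_morph ?m_inv_morph. Qed.

Lemma m_prodpow_morph n (b : 'I_n -> T1) k :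
  (forall i, m_invertible op1 e1 (b i)) ->
  f (m_prodpow op1 e1 b k) = m_prodpow op2 e2 (fun i => f (b i)) k.
Proof.
move=> ib; rewrite /m_prodpow (big_morph f fM f1).
by apply: eq_bigr => i _; apply: m_zpow_morph.
Qed.
End MonoidMorphism.

Section Realms.
Variables (K : fieldType) (X : scalable_monoid K).
Local Notation mul := (@sm_mul K X).
Local Notation one := (sm_one X).
Local Notation prodpow b k := (m_prodpow mul one b k).
Local Open Scope ring_scope.

Let mulXA : associative mul := @sm_mulA K X.
Let mul1X : left_id one mul := @sm_mul1x K X.
Let mulX1 : right_id one mul := @sm_mulx1 K X.

Lemma commensurable_refl (x : X) : commensurable x x.
Proof. by exists 1, 1. Qed.

Lemma commensurable_sym (x y : X) : commensurable x y -> commensurable y x.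
Proof. by case=> a [b h]; exists b, a. Qed.

Lemma commensurable_trans (x y z : X) :
  commensurable x y -> commensurable y z -> commensurable x z.
Proof.
case=> a [b xy] [c [d yz]]; exists (c * a), (b * d).
by rewrite -sm_scaleA xy sm_scaleA mulrC -(sm_scaleA b c) yz sm_scaleA.
Qed.

Lemma commensurable_mul (x x' y y' : X) :
  commensurable x x' -> commensurable y y' -> commensurable (mul x y) (mul x' y').
Proof.
case=> a [b xx'] [c [d yy']]; exists (a * c), (b * d).
by rewrite -!sm_scaleA sm_scale_mulr sm_scale_mull yy' xx' -sm_scale_mull -sm_scale_mulr.
Qed.

Lemma realm_val_inj (r s : realms X) : sval r = sval s -> r = s.
Proof. by case: r s => p hp [q hq] /= pq; subst q; congr exist; apply: proof_irrelevance. Qed.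

Lemma realm_eqE (x y : X) : realm x = realm y <-> commensurable x y.
Proof.
split=> xy.
  have yy : sval (realm y) y by exact: commensurable_refl.
  by rewrite -xy in yy.
apply/realm_val_inj/functional_extensionality => z /=.
apply: propositional_extensionality; rewrite /realm_pred.
by split; [apply: commensurable_trans (commensurable_sym xy) | apply: commensurable_trans].
Qed.

Lemma realm_repK (r : realms X) : realm (realm_rep r) = r.
Proof.
apply: realm_val_inj; symmetry.
apply: (epsilon_spec (inhabits one) (fun x => sval r = realm_pred x)).
by case: r => p [x px]; exists x.
Qed.

Lemma realm_mulE (x y : X) : realm_mul (realm x) (realm y) = realm (mul x y).
Proof. by apply/realm_eqE/commensurable_mul; apply/realm_eqE; rewrite realm_repK. Qed.

Lemma realm_mulA : associative (@realm_mul K X).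
Proof.
move=> r s t; rewrite -(realm_repK r) -(realm_repK s) -(realm_repK t).
by rewrite !realm_mulE sm_mulA.
Qed.

Lemma realm_mul1r : left_id (realm_one X) (@realm_mul K X).
Proof. by move=> r; rewrite -(realm_repK r) realm_mulE sm_mul1x. Qed.

Lemma realm_mulr1 : right_id (realm_one X) (@realm_mul K X).
Proof. by move=> r; rewrite -(realm_repK r) realm_mulE sm_mulx1. Qed.

Lemma realm_prodpow n (b : 'I_n -> X) k : (forall i, sm_invertible (b i)) ->
  realm (prodpow b k) = m_prodpow (@realm_mul K X) (realm_one X) (fun i => realm (b i)) k.
Proof.
have realmM : {morph @realm K X : x y / mul x y >-> realm_mul x y}.
  by move=> x y; rewrite realm_mulE.
exact: (@m_prodpow_morph _ _ _ one _ _ realm_mulA realm_mul1r realm_mulr1 _ realmM erefl).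
Qed.

Lemma realms_basis_of_sm_basis n (b : 'I_n -> X) :
  sm_basis b -> realms_basis (fun i => realm (b i)) /\ injective (fun i => realm (b i)).
Proof.
move=> [ib [span uniq_exp]]; split; first split.
- move=> r; rewrite -(realm_repK r); have [mu [k ->]] := span (realm_rep r).
  exists k; rewrite -realm_prodpow //; apply/realm_eqE.
  by exists 1, mu; rewrite sm_scale1.
- move=> k k'; rewrite -!realm_prodpow // => /realm_eqE [a [c ac]].
  exact: (uniq_exp _ _ _ _ ac).2.
- move=> i j /realm_eqE [a [c ac]].
  rewrite -(m_prodpow_delta mul1X mulX1 b i) -(m_prodpow_delta mul1X mulX1 b j) in ac.
  have := (uniq_exp _ _ _ _ ac).2 i; rewrite eqxx.
  by have [|] := eqVneq i j.
Qed.

Section WithBasis.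
Variables (m : nat) (c : 'I_m -> X).
Hypothesis c_basis : sm_basis c.

Lemma sm_one_neq_scale0 (y : X) : one <> sm_scale 0 y.
Proof.
have [_ [span uniq_exp]] := c_basis; move=> one0.
have [_ [r _]] := span one; have [t [tt ht]] := span (mul y (prodpow c r)).
have : sm_scale 1 (prodpow c r) = sm_scale (0 * t) (prodpow c tt).
  by rewrite sm_scale1 -sm_scaleA -ht sm_scale_mull -one0 sm_mul1x.
by case/uniq_exp; rewrite mul0r => /eqP; rewrite oner_eq0.
Qed.

(* Commensurable elements have the same exponents on the basis [c]. *)
Lemma commensurable_invertible_scale (x y : X) :
  commensurable x y -> sm_invertible y -> exists mu, x = sm_scale mu y.
Proof.
have [_ [span uniq_exp]] := c_basis.
case=> a [b xy] [y' [yy' _]].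
have [mu [k xE]] := span x; have [nu [k' yE]] := span y.
move: xy; rewrite xE yE !sm_scaleA => /uniq_exp [_ /functional_extensionality kk'].
subst k'; have nu0 : nu != 0.
  apply/eqP => nu0; apply: (@sm_one_neq_scale0 (mul (prodpow c k) y')).
  by rewrite -{1}yy' yE nu0 sm_scale_mull.
by exists (mu / nu); rewrite sm_scaleA divfK.
Qed.

Lemma sm_scale_inj (mu mu' : K) (q : X) :
  sm_invertible q -> sm_scale mu q = sm_scale mu' q -> mu = mu'.
Proof.
have [_ [span uniq_exp]] := c_basis.
case=> q' [qq' _] muq.
have mu1 : sm_scale mu one = sm_scale mu' one by rewrite -qq' !sm_scale_mull muq.
have [s [r oneE]] := span one.
have s0 : s != 0.
  by apply/eqP => s0; apply: (@sm_one_neq_scale0 (prodpow c r)); rewrite {1}oneE s0.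
by move: mu1; rewrite oneE !sm_scaleA => /uniq_exp [/mulIf ->].
Qed.

Lemma sm_basis_of_realms_basis n (b : 'I_n -> X) :
  (forall i, sm_invertible (b i)) -> realms_basis (fun i => realm (b i)) -> sm_basis b.
Proof.
move=> ib [span uniq_exp]; split=> //; split.
- move=> x; have [k] := span (realm x); rewrite -realm_prodpow // => /realm_eqE xk.
  have [mu ->] := commensurable_invertible_scale xk (m_invertible_prodpow mulXA mulX1 k ib).
  by exists mu, k.
- move=> mu mu' k k' muk.
  have kk' : forall i, k i = k' i.
    apply: uniq_exp; rewrite -!realm_prodpow //; apply/realm_eqE.
    by exists mu, mu'.
  move/functional_extensionality: kk' muk => <- muk; split=> //.
  exact: sm_scale_inj (m_invertible_prodpow mulXA mulX1 k ib) muk.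
Qed.
End WithBasis.
End Realms.

Theorem mainTheorem14 (K : fieldType) (X : scalable_monoid K) :
  quantity_space X ->
  (forall (n : nat) (b : 'I_n -> X),
      sm_basis b ->
      realms_basis (fun i => realm (b i)) /\ injective (fun i => realm (b i))) /\
  (forall (n : nat) (b : 'I_n -> X),
      (forall i, sm_invertible (b i)) ->
      realms_basis (fun i => realm (b i)) ->
      (forall i j : 'I_n, i != j -> realm (b i) <> realm (b j)) ->
      sm_basis b /\ injective b).
Proof.
move=> [_ [m [c c_basis]]]; split; first exact: realms_basis_of_sm_basis.
move=> n b ib rbasis distinct; split; first exact: (sm_basis_of_realms_basis c_basis ib rbasis).
move=> i j bij; apply/eqP; apply: contraT => /distinct.
by rewrite bij.
Qed.
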